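(* Let $G=(V,E)$ be a finite simple undirected graph and $K$ a nonnegative integer. Construct an edge-labeled graph $G'$ with three categories red, blue, green as follows: its nodes are $V$ together with, for each edge $\{u,v\}\in E$ (with an arbitrary choice of which endpoint is called $u$), four new auxiliary nodes $a,b,c,d$ specific to that edge; for each edge $\{u,v\}\in E$ add the six labeled edges $\{u,c\}$ blue, $\{c,d\}$ green, $\{d,v\}$ red, $\{v,b\}$ blue, $\{b,a\}$ green, $\{a,u\}$ red. Then there exists a partition of $V$ into two sets with at least $K$ edges of $G$ crossing the partition if and only if there exists an assignment $Y$ of the nodes of $G'$ to the three colors with $\mathrm{CatEdgeClus}(Y)\le 4|E|-K$.
   Context: For an edge-labeled graph with node set $V'$, edge collection $E'$, categories $C$ and labeling $\ell:E'\to C$, and a node coloring $Y:V'\to C$, an edge $e$ is a mistake ($m_Y(e)=1$) if some endpoint $i\in e$ has $Y[i]\neq\ell(e)$, and $m_Y(e)=0$ otherwise; $\mathrm{CatEdgeClus}(Y)=\sum_{e\in E'}m_Y(e)$ is the number of mistakes. *)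

From mathcomp Require Import all_boot.
Set Implicit Arguments. Unset Strict Implicit. Unset Printing Implicit Defensive.

(* An edge-labeled graph: node type N, finite edge collection Ed (a finType,
   so parallel edges are allowed as in "edge collection"), each edge e having
   the two endpoints (ends e).1, (ends e).2, and a label lab e in C. *)
Definition mistake (N C : eqType) (Ed : Type) (ends : Ed -> N * N)
  (lab : Ed -> C) (Y : N -> C) (e : Ed) : bool :=
  (Y (ends e).1 != lab e) || (Y (ends e).2 != lab e).

Definition CatEdgeClus (N C : eqType) (Ed : finType) (ends : Ed -> N * N)
  (lab : Ed -> C) (Y : N -> C) : nat :=
  \sum_(e : Ed) nat_of_bool (mistake ends lab Y e).

(* The orientation (src = u,
   dst = v) is the paper's arbitrary choice of which endpoint is called u. *)
Definition simple_graph (V E : finType) (src dst : E -> V) : Prop :=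
  (forall e, src e != dst e) /\
  (forall e1 e2, ((src e1 == src e2) && (dst e1 == dst e2)) ||
                 ((src e1 == dst e2) && (dst e1 == src e2)) -> e1 = e2).

Definition cut_size (V E : finType) (src dst : E -> V) (S : {set V}) : nat :=
  #|[set e : E | (src e \in S) != (dst e \in S)]|.

Definition color := 'I_3.
Definition red : color := @Ordinal 3 0 isT.
Definition blue : color := @Ordinal 3 1 isT.
Definition green : color := @Ordinal 3 2 isT.

(* nodes of G': original vertices, plus four auxiliary nodes per edge;
   auxiliary index 0,1,2,3 stands for a,b,c,d *)
Definition gnode (V E : finType) : finType := (V + (E * 'I_4))%type.

Definition aux (V E : finType) (e : E) (k : nat) : gnode V E :=
  inr (e, inord k).

Definition gedge (E : finType) : finType := (E * 'I_6)%type.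

Definition gends (V E : finType) (src dst : E -> V) (f : gedge E)
  : gnode V E * gnode V E :=
  let: (e, j) := f in
  let u : gnode V E := inl (src e) in
  let v : gnode V E := inl (dst e) in
  let a := aux V e 0 in let b := aux V e 1 in
  let c := aux V e 2 in let d := aux V e 3 in
  match nat_of_ord j with
  | 0 => (u, c)
  | 1 => (c, d)
  | 2 => (d, v)
  | 3 => (v, b)
  | 4 => (b, a)
  | _ => (a, u)
  end.

Definition glab (E : finType) (f : gedge E) : color :=
  match nat_of_ord f.2 with
  | 0 => blue | 1 => green | 2 => red
  | 3 => blue | 4 => green | _ => red
  end.

(* The six new edges of an original edge {u,v} form the cycle u-c-d-v-b-a-u whose
   labels blue, green, red, blue, green, red differ at every node, so the
   correctly colored edges form a matching: at most 3 of them.  The only two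
   perfect matchings color u blue and v red or vice versa, hence every coloring
   makes at least 4 mistakes on the gadget of an uncut edge and at least 3 on a
   cut one, blue versus non-blue being the side of a vertex.  Conversely,
   coloring S blue and its complement red and completing each gadget along one
   perfect matching (or all green on an uncut edge) attains these bounds, so
   mistakes plus cut edges is exactly 4|E|. *)

From mathcomp Require Import all_boot all_order all_algebra.
Import GRing.Theory Num.Theory.

Set Implicit Arguments.
Unset Strict Implicit.

Definition gadget_cost (yu yv ya yb yc yd : color) : nat :=
  ((yu != blue) || (yc != blue)) + ((yc != green) || (yd != green)) +
  ((yd != red) || (yv != red)) + ((yv != blue) || (yb != blue)) +
  ((yb != green) || (ya != green)) + ((ya != red) || (yu != red)).

Lemma gadget_cost_lower_bound (yu yv ya yb yc yd : color) :
  4 <= gadget_cost yu yv ya yb yc yd + ((yu == blue) != (yv == blue)).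
Proof.
by case: yu => [[|[|[|]]] ?] //; case: yv => [[|[|[|]]] ?] //;
   case: ya => [[|[|[|]]] ?] //; case: yb => [[|[|[|]]] ?] //;
   case: yc => [[|[|[|]]] ?] //; case: yd => [[|[|[|]]] ?].
Qed.

Definition side_color (b : bool) : color := if b then blue else red.

Definition gadget_coloring (bu bv : bool) (k : 'I_4) : color :=
  if bu == bv then green
  else if bu then nth green [:: green; green; blue; red] k
  else nth green [:: red; blue; green; green] k.

Lemma gadget_cost_side_coloring (bu bv : bool) :
  gadget_cost (side_color bu) (side_color bv)
    (gadget_coloring bu bv (inord 0)) (gadget_coloring bu bv (inord 1))
    (gadget_coloring bu bv (inord 2)) (gadget_coloring bu bv (inord 3))
  + (bu != bv) = 4.
Proof. by rewrite /gadget_coloring !inordK //; case: bu; case: bv. Qed.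

Lemma CatEdgeClus_pair (N C : eqType) (E I : finType) (ends : E * I -> N * N)
    (lab : E * I -> C) (Y : N -> C) :
  CatEdgeClus ends lab Y = \sum_(e : E) \sum_(i : I) mistake ends lab Y (e, i).
Proof. by rewrite /CatEdgeClus pair_big; apply: eq_big => // -[]. Qed.

Section Reduction.

Variables (V E : finType) (src dst : E -> V).

Local Notation clus := (CatEdgeClus (gends src dst) (@glab E)).

Lemma CatEdgeClus_gadgets (Y : gnode V E -> color) :
  clus Y = \sum_(e : E) gadget_cost (Y (inl (src e))) (Y (inl (dst e)))
             (Y (aux V e 0)) (Y (aux V e 1)) (Y (aux V e 2)) (Y (aux V e 3)).
Proof.
rewrite CatEdgeClus_pair; apply: eq_bigr => e _.
by rewrite !big_ord_recl big_ord0 /mistake /= !addnA addn0.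
Qed.

Lemma cut_sizeE (S : {set V}) :
  cut_size src dst S = \sum_(e : E) ((src e \in S) != (dst e \in S)).
Proof.
by rewrite /cut_size -sum1dep_card big_mkcond; apply: eq_bigr => e _; case: ifP.
Qed.

Definition blue_side (Y : gnode V E -> color) : {set V} :=
  [set x | Y (inl x) == blue].

Lemma CatEdgeClus_blue_side_cut (Y : gnode V E -> color) :
  4 * #|E| <= clus Y + cut_size src dst (blue_side Y).
Proof.
rewrite CatEdgeClus_gadgets cut_sizeE -big_split mulnC -sum_nat_const.
by apply: leq_sum => e _; rewrite !inE gadget_cost_lower_bound.
Qed.

Definition side_coloring (S : {set V}) (n : gnode V E) : color :=
  match n with
  | inl x => side_color (x \in S)
  | inr (e, k) => gadget_coloring (src e \in S) (dst e \in S) k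
  end.

Lemma CatEdgeClus_side_coloring (S : {set V}) :
  clus (side_coloring S) + cut_size src dst S = 4 * #|E|.
Proof.
rewrite CatEdgeClus_gadgets cut_sizeE -big_split mulnC -sum_nat_const.
by apply: eq_bigr => e _; exact: gadget_cost_side_coloring.
Qed.

End Reduction.

Theorem mainTheorem4 (V E : finType) (src dst : E -> V) (K : nat) :
  simple_graph src dst ->
  (exists S : {set V}, (K <= cut_size src dst S)%N) <->
  (exists Y : gnode V E -> color,
      ((CatEdgeClus (gends src dst) (@glab E) Y)%:Z
         <= (4 * #|E|)%:Z - K%:Z)%R).
Proof.
move=> _; split.
- case=> S cutS; exists (side_coloring src dst S).
  rewrite lerBrDr -PoszD lez_nat -(CatEdgeClus_side_coloring src dst S).
  by rewrite leq_add2l.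
- case=> Y; rewrite lerBrDr -PoszD lez_nat => clusY.
  exists (blue_side Y).
  rewrite -(leq_add2l (CatEdgeClus (gends src dst) (@glab E) Y)).
  exact: leq_trans clusY (CatEdgeClus_blue_side_cut src dst Y).
Qed.
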